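(* For every index $\mathbf k$ of depth $r$, \[\sum_{i=0}^{r}(-1)^i\,\zeta^{t,*}_{\mathrm{shift}}(\overleftarrow{\mathbf k_{[i]}};T)\,\zeta^{t,\star,*}_{\mathrm{shift}}(\mathbf k^{[i]};T)=\delta_{0,r},\] where $\delta$ is Kronecker's delta.
   Context: $t,T$ are commuting indeterminates. An index is a finite tuple $\mathbf{k}=(k_1,\dots,k_r)$ of positive integers ($r\ge0$), $\mathrm{dep}(\mathbf k)=r$, $\mathrm{wt}(\mathbf k)=\sum k_i$; $\mathbf{k}_{[i]}=(k_1,\dots,k_i)$, $\mathbf{k}^{[i]}=(k_{i+1},\dots,k_r)$, $\overleftarrow{\mathbf{k}}=(k_r,\dots,k_1)$; $\oplus$ is componentwise sum and $b\binom{\mathbf{k}}{\mathbf{l}}=\prod_{i}\binom{k_i+l_i-1}{l_i}$. $\zeta^*(\mathbf k;T)$ is the harmonic regularized polynomial: with $\mathfrak H=\mathbb Q\langle e_0,e_1\rangle$, $e_{\mathbf{k}}=e_1e_0^{k_1-1}\cdots e_1e_0^{k_r-1}$, $Z^*_T$ the unique $\mathbb Q$-algebra homomorphism $(\mathbb Q+e_1\mathfrak H,* )\to\mathbb R[T]$ (harmonic product $*$) with $Z^*_T(e_{\mathbf k})=(-1)^{\mathrm{dep}}\zeta(\mathbf k)$ for admissible $\mathbf k$ (empty or $k_r\ge2$, $\zeta$ the MZV) and $Z^*_T(e_1)=-T$, $\zeta^*(\mathbf k;T)=(-1)^{\mathrm{dep}(\mathbf k)}Z^*_T(e_{\mathbf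 k})$. $\zeta^{t,*}_{\mathrm{shift}}(\mathbf{k};T)=\sum_{\mathbf n\in\mathbb Z_{\ge0}^{\mathrm{dep}(\mathbf k)}}b\binom{\mathbf k}{\mathbf n}\zeta^{*}(\mathbf k\oplus\mathbf n;T)(-t)^{\mathrm{wt}(\mathbf n)}$. $\mathbf l\preceq\mathbf k$ means $\mathbf l$ is obtained from $(k_1\circ\cdots\circ k_r)$ by replacing each $\circ$ by a comma or a plus sign ($\varnothing\preceq\varnothing$), and $\zeta^{t,\star,*}_{\mathrm{shift}}(\mathbf k;T)=\sum_{\mathbf l\preceq\mathbf k}\zeta^{t,*}_{\mathrm{shift}}(\mathbf l;T)$. *)

From HB Require Import structures.
From mathcomp Require Import all_boot all_order all_algebra.
From mathcomp Require Import all_classical all_reals topology normedtype sequences.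
Set Implicit Arguments. Unset Strict Implicit. Unset Printing Implicit Defensive.
Import Order.TTheory GRing.Theory Num.Theory numFieldNormedType.Exports.
Local Open Scope ring_scope.

Definition is_index (k : seq nat) : bool := all (fun x => (0 < x)%N) k.

Definition admissible (k : seq nat) : bool :=
  (k == [::]) || (1 < last 0%N k)%N.

Section Zeta.
Variable R : realType.

(* sum over m < n_1 < ... < n_r < N of prod n_i^{-k_i} *)
Fixpoint zeta_trunc_from (k : seq nat) (m N : nat) : R :=
  match k with
  | [::] => 1
  | a :: k' => \sum_(m.+1 <= n < N) (n%:R ^- a) * zeta_trunc_from k' n N
  end.

Definition zeta_trunc (k : seq nat) (N : nat) : R := zeta_trunc_from k 0 N.

(* multiple zeta value zeta(k) = sum_{0<n_1<...<n_r} 1/(n_1^k_1 ... n_r^k_r)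
   (convergent for admissible k) *)
Definition mzv (k : seq nat) : R := limn (zeta_trunc k : R^nat).
End Zeta.

(* harmonic (stuffle) product of two indices, as a list of indices with
   multiplicity *)
Fixpoint stuffle (k : seq nat) : seq nat -> seq (seq nat) :=
  match k with
  | [::] => fun l => [:: l]
  | a :: k' =>
    fix st (l : seq nat) : seq (seq nat) :=
      match l with
      | [::] => [:: a :: k']
      | b :: l' => map (cons a) (stuffle k' l) ++ map (cons b) (st l')
                   ++ map (cons (a + b)%N) (stuffle k' l')
      end
  end.

(* Z : index -> R[T] is the harmonic regularized polynomial zeta^*(.;T):
   the image under (-1)^dep Z^*_T of the algebra homomorphism
   (Q + e_1 H, * ) -> R[T] with Z^*_T(e_k) = (-1)^dep zeta(k) for admissible k
   and Z^*_T(e_1) = -T. *)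
Definition harmonic_regularization (R : realType) (Z : seq nat -> {poly R}) :=
  [/\ forall k, is_index k -> admissible k -> Z k = (mzv R k)%:P,
      Z [:: 1%N] = 'X &
      forall k l, is_index k -> is_index l ->
        Z k * Z l = \sum_(m <- stuffle k l) Z m].

Fixpoint weak_comps (r m : nat) : seq (seq nat) :=
  match r with
  | 0%N => if m == 0%N then [:: [::]] else [::]
  | r'.+1 => flatten [seq map (cons j) (weak_comps r' (m - j)) | j <- iota 0 m.+1]
  end.

Definition bbin (k n : seq nat) : nat :=
  \prod_(p <- zip k n) 'C(p.1 + p.2 - 1, p.2).

Definition oplus (k n : seq nat) : seq nat := [seq p.1 + p.2 | p <- zip k n]%N.

(* Formal power series in t with coefficients in R[T]: coefficient sequence. *)
Definition pseries (R : realType) := nat -> {poly R}.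

Definition pmul (R : realType) (f g : pseries R) : pseries R :=
  fun m => \sum_(j < m.+1) f j * g (m - j)%N.

(* zeta^{t,*}_shift(k;T) = sum_n b(k;n) zeta^*(k (+) n;T) (-t)^{wt n} *)
Definition zeta_shift (R : realType) (Z : seq nat -> {poly R}) (k : seq nat)
  : pseries R :=
  fun m => (-1) ^+ m *
    \sum_(n <- weak_comps (size k) m) (bbin k n)%:R *: Z (oplus k n).

(* all l with l \preceq k (each choice of ',' / '+' for the gaps) *)
Fixpoint coarsenings (k : seq nat) : seq (seq nat) :=
  match k with
  | [::] => [:: [::]]
  | a :: k' =>
    match k' with
    | [::] => [:: [:: a]]
    | _ => flatten [seq [:: a :: l; (a + head 0 l)%N :: behead l]
                   | l <- coarsenings k']
    end
  end.

Definition zeta_shift_star (R : realType) (Z : seq nat -> {poly R})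
  (k : seq nat) : pseries R :=
  fun m => \sum_(l <- coarsenings k) zeta_shift Z l m.

(* The shift  e_k |-> sum_n b(k;n) e_(k+n) (-t)^wt(n)  is a homomorphism for the
   harmonic product.  Shifting a leading letter a by i carries the weight
   C(a+i-1, i), the coefficient of t^i in (1-t)^(-a); these weights convolve as
   (1-t)^(-a) (1-t)^(-b) = (1-t)^(-a-b), which is exactly what the merged letter
   a+b of the stuffle recursion requires.  Hence the i-th summand is
   zeta^{t,*}_shift applied to the harmonic product of the reversed prefix with
   all coarsenings of the suffix.  Splitting these words according to whether their
   first letter comes from the suffix, the i-th summand is the sum of the
   (i-1)-st and i-th pieces, so the alternating sum telescopes down to the empty
   word. *)

From HB Require Import structures.
From mathcomp Require Import all_boot all_order all_algebra.
From mathcomp Require Import all_classical all_reals topology normedtype sequences.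
Import Order.TTheory GRing.Theory Num.Theory numFieldNormedType.Exports.
Set Implicit Arguments. Unset Strict Implicit. Unset Printing Implicit Defensive.
Local Open Scope ring_scope.

Section Cauchy.
Variable A : zmodType.

Definition cauchy (f : nat -> nat -> A) m := \sum_(j < m.+1) f j (m - j)%N.

Lemma eq_cauchy (f g : nat -> nat -> A) m :
  (forall j k, (j + k = m)%N -> f j k = g j k) -> cauchy f m = cauchy g m.
Proof. by move=> fg; apply: eq_bigr => j _; rewrite fg // subnKC // -ltnS. Qed.

Lemma cauchyC (f : nat -> nat -> A) m : cauchy f m = cauchy (fun j k => f k j) m.
Proof.
rewrite /cauchy (reindex_inj rev_ord_inj); apply: eq_bigr => j _ /=.
by rewrite subKn // -ltnS.
Qed.

Lemma sum_triangle (g : nat -> nat -> A) m :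
  \sum_(p < m.+1) \sum_(j < p.+1) g j (p - j)%N =
  \sum_(j < m.+1) \sum_(i < (m - j).+1) g j i.
Proof.
elim: m => [|m IH]; first by rewrite !big_ord_recl !big_ord0.
rewrite big_ord_recr /= IH [in RHS]big_ord_recr [X in _ + X]big_ord_recr /=.
rewrite subnn big_ord1 addrA; congr (_ + _).
rewrite -big_split; apply: eq_bigr => j _ /=.
have jm : (j <= m)%N by rewrite -ltnS.
by rewrite subSn // [RHS]big_ord_recr.
Qed.

Lemma cauchyA (f : nat -> nat -> nat -> A) m :
  cauchy (fun p s => cauchy (fun j i => f j i s) p) m =
  cauchy (fun j l => cauchy (fun i s => f j i s) l) m.
Proof.
rewrite /cauchy -(sum_triangle (fun j i => f j i (m - j - i)%N)).
apply: eq_bigr => p _; apply: eq_bigr => j _.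
by rewrite -subnDA subnKC // -ltnS.
Qed.

Lemma cauchyAC (f : nat -> nat -> nat -> A) m :
  cauchy (fun j l => cauchy (fun i s => f j i s) l) m =
  cauchy (fun i l => cauchy (fun j s => f j i s) l) m.
Proof.
rewrite -cauchyA (@eq_cauchy _ (fun p s => cauchy (fun i j => f j i s) p)).
  exact: cauchyA.
by move=> p s _; rewrite cauchyC.
Qed.

Lemma cauchyD (f g : nat -> nat -> A) m :
  cauchy (fun j k => f j k + g j k) m = cauchy f m + cauchy g m.
Proof. exact: big_split. Qed.

Lemma cauchy_sum I (r : seq I) (f : I -> nat -> nat -> A) m :
  cauchy (fun j k => \sum_(i <- r) f i j k) m = \sum_(i <- r) cauchy (f i) m.
Proof. exact: exchange_big. Qed.

Lemma cauchyMn (f : nat -> nat -> A) n m :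
  cauchy f m *+ n = cauchy (fun j k => f j k *+ n) m.
Proof. exact: esym (sumrMnl _ _ _ _). Qed.

Lemma cauchy_delta (g : nat -> A) m :
  cauchy (fun j k => g k *+ (j == 0%N)) m = g m.
Proof. by rewrite /cauchy big_ord_recl subn0 big1 ?addr0. Qed.

End Cauchy.

Definition bcoef (a i : nat) : nat := 'C(a + i - 1, i).

Lemma bcoef0 a : bcoef a 0 = 1%N.
Proof. exact: bin0. Qed.

Lemma bcoef0S i : bcoef 0 i.+1 = 0%N.
Proof. by rewrite /bcoef add0n subn1 bin_small. Qed.

Lemma bcoefSS b i : bcoef b.+1 i.+1 = (bcoef b i.+1 + bcoef b.+1 i)%N.
Proof.
case: b => [|b]; first by rewrite bcoef0S /bcoef !add1n !subn1 !binn.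
by rewrite /bcoef !addSn !subn1 /= addnS binS.
Qed.

Lemma bcoef_Vandermonde a b q :
  (\sum_(i < q.+1) bcoef a i * bcoef b (q - i) = bcoef (a + b) q)%N.
Proof.
elim: b q => [|b IHb] q.
  rewrite big_ord_recr /= subnn bcoef0 muln1 addn0 big1 // => -[i /= lt_iq] _.
  by rewrite -(subnSK lt_iq) bcoef0S muln0.
elim: q => [|q IHq]; first by rewrite big_ord1 !bcoef0.
have split_term (i : 'I_q.+1) : (bcoef a i * bcoef b.+1 (q.+1 - i) =
    bcoef a i * bcoef b (q.+1 - i) + bcoef a i * bcoef b.+1 (q - i))%N.
  by rewrite -mulnDr subSn ?bcoefSS // -ltnS.
rewrite big_ord_recr /= subnn bcoef0 muln1 (eq_bigr _ (fun i _ => split_term i)).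
rewrite big_split /= IHq addnAC.
have := IHb q.+1; rewrite big_ord_recr /= subnn bcoef0 muln1 => ->.
by rewrite addnS bcoefSS.
Qed.

Section BinomialConvolution.
Variable A : zmodType.

Definition bconv (a : nat) (f : nat -> nat -> A) m :=
  cauchy (fun i r => f i r *+ bcoef a i) m.

Lemma eq_bconv a (f g : nat -> nat -> A) m :
  (forall i r, f i r = g i r) -> bconv a f m = bconv a g m.
Proof. by move=> eq_fg; apply: eq_cauchy => i r _; rewrite eq_fg. Qed.

Lemma bconvD a (f g : nat -> nat -> A) m :
  bconv a (fun i r => f i r + g i r) m = bconv a f m + bconv a g m.
Proof. by rewrite /bconv -cauchyD; apply: eq_cauchy => i r _; rewrite mulrnDl. Qed.

Lemma bconv_sum a I (s : seq I) (f : I -> nat -> nat -> A) m :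
  bconv a (fun i r => \sum_(x <- s) f x i r) m = \sum_(x <- s) bconv a (f x) m.
Proof. by rewrite /bconv -cauchy_sum; apply: eq_cauchy => i r _; rewrite sumrMnl. Qed.

Lemma bconvAC a b (f : nat -> nat -> nat -> A) m :
  bconv a (fun i r => bconv b (f i) r) m =
  bconv b (fun j r => bconv a (fun i => f i j) r) m.
Proof.
rewrite /bconv (eq_cauchy (g := fun i r =>
  cauchy (fun j s => f i j s *+ bcoef b j *+ bcoef a i) r)); last first.
  by move=> i r _; rewrite cauchyMn.
rewrite cauchyAC; apply: eq_cauchy => j r _; rewrite cauchyMn.
by apply: eq_cauchy => i s _; rewrite mulrnAC.
Qed.

Lemma bconv_nest a b (f : nat -> nat -> A) m :
  bconv a (fun i r => bconv b (fun j => f (i + j)%N) r) m = bconv (a + b) f m.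
Proof.
pose F i j s := f (i + j)%N s *+ (bcoef a i * bcoef b j).
rewrite /bconv (eq_cauchy (g := fun i r => cauchy (F i) r)); last first.
  move=> i r _; rewrite cauchyMn; apply: eq_cauchy => j s _.
  by rewrite /F mulnC mulrnA.
rewrite -cauchyA; apply: eq_cauchy => q s _.
rewrite -bcoef_Vandermonde -sumrMnr; apply: eq_bigr => i _.
by rewrite /F subnKC // -ltnS.
Qed.

End BinomialConvolution.

Section ShiftSum.
Variable A : zmodType.
Implicit Types (F : seq nat -> A) (H : seq nat -> seq nat -> A) (u v x : seq nat).

Definition shift_sum F u m :=
  \sum_(n <- weak_comps (size u) m) F (oplus u n) *+ bbin u n.

Lemma shift_sum_nil F m : shift_sum F [::] m = F [::] *+ (m == 0%N).
Proof.
rewrite /shift_sum /=; case: eqP => _; last by rewrite big_nil.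
by rewrite big_seq1 /bbin /= big_nil.
Qed.

Lemma shift_sum_cons F a u m :
  shift_sum F (a :: u) m =
  bconv a (fun i => shift_sum (fun x => F ((a + i)%N :: x)) u) m.
Proof.
rewrite /shift_sum.
have -> : weak_comps (size (a :: u)) m =
  flatten [seq map (cons i) (weak_comps (size u) (m - i)) | i <- iota 0 m.+1].
  by [].
rewrite big_flatten big_map -[iota 0 m.+1]/(index_iota 0 m.+1).
rewrite big_mkord; apply: eq_bigr => i _; rewrite big_map -sumrMnl.
apply: eq_bigr => n _.
by rewrite /bbin /= big_cons mulnC mulrnA.
Qed.

Lemma eq_shift_sum F1 F2 u m :
  (forall x, F1 x = F2 x) -> shift_sum F1 u m = shift_sum F2 u m.
Proof. by move=> eqF; apply: eq_bigr => n _; rewrite eqF. Qed.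

Lemma eq_shift_sum_index F1 F2 u m : is_index u ->
  (forall x, is_index x -> F1 x = F2 x) -> shift_sum F1 u m = shift_sum F2 u m.
Proof.
move=> u_idx eqF; apply: eq_bigr => n _; rewrite eqF //.
elim: u n u_idx {eqF} => [|a u IH] [|j n] //= /andP[a_gt0 u_idx].
by rewrite /is_index /= ltn_addr //; apply: IH.
Qed.

Lemma shift_sumD F1 F2 u m :
  shift_sum (fun x => F1 x + F2 x) u m = shift_sum F1 u m + shift_sum F2 u m.
Proof. by rewrite -big_split; apply: eq_bigr => n _; rewrite mulrnDl. Qed.

Lemma shift_sumMn F c u m :
  shift_sum (fun x => F x *+ c) u m = shift_sum F u m *+ c.
Proof. by rewrite -sumrMnl; apply: eq_bigr => n _; rewrite mulrnAC. Qed.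

Lemma shift_sum_sum I (r : seq I) (F : I -> seq nat -> A) u m :
  shift_sum (fun x => \sum_(i <- r) F i x) u m = \sum_(i <- r) shift_sum (F i) u m.
Proof. by rewrite exchange_big; apply: eq_bigr => n _; rewrite sumrMnl. Qed.

Lemma shift_sum_bconv (f : seq nat -> nat -> nat -> A) b u j k :
  shift_sum (fun x => bconv b (f x) k) u j =
  bconv b (fun i r => shift_sum (fun x => f x i r) u j) k.
Proof.
rewrite /bconv /cauchy.
rewrite (shift_sum_sum _ (fun (i : 'I_k.+1) x => f x i (k - i)%N *+ bcoef b i)).
by apply: eq_bigr => i _; rewrite shift_sumMn.
Qed.

Definition shift_sum2 H u v m :=
  cauchy (fun j k => shift_sum (fun x => shift_sum (H x) v k) u j) m.

Lemma shift_sum2_nill H v m : shift_sum2 H [::] v m = shift_sum (H [::]) v m.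
Proof.
rewrite /shift_sum2 -[RHS](cauchy_delta (shift_sum (H [::]) v)).
by apply: eq_cauchy => j k _; rewrite shift_sum_nil.
Qed.

Lemma shift_sum2_nilr H u m :
  shift_sum2 H u [::] m = shift_sum (fun x => H x [::]) u m.
Proof.
rewrite /shift_sum2 cauchyC -[RHS](cauchy_delta (shift_sum (fun x => H x [::]) u)).
by apply: eq_cauchy => j k _; rewrite -shift_sumMn; apply: eq_shift_sum => x;
  rewrite shift_sum_nil.
Qed.

Lemma eq_shift_sum2 H1 H2 u v m : (forall x y, H1 x y = H2 x y) ->
  shift_sum2 H1 u v m = shift_sum2 H2 u v m.
Proof.
move=> eqH; apply: eq_cauchy => j k _.
by apply: eq_shift_sum => x; apply: eq_shift_sum => y.
Qed.

Lemma shift_sum2D H1 H2 u v m :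
  shift_sum2 (fun x y => H1 x y + H2 x y) u v m =
  shift_sum2 H1 u v m + shift_sum2 H2 u v m.
Proof.
rewrite /shift_sum2 -cauchyD; apply: eq_cauchy => j k _.
by rewrite -shift_sumD; apply: eq_shift_sum => x; rewrite shift_sumD.
Qed.

Lemma shift_sum2_consl H a u v m :
  shift_sum2 H (a :: u) v m =
  bconv a (fun i => shift_sum2 (fun x => H ((a + i)%N :: x)) u v) m.
Proof.
rewrite /shift_sum2 (eq_cauchy (g := fun j k => bconv a (fun i r =>
  shift_sum (fun x => shift_sum (H ((a + i)%N :: x)) v k) u r) j)); last first.
  by move=> j k _; rewrite shift_sum_cons.
by rewrite /bconv cauchyA; apply: eq_cauchy => i l _; rewrite cauchyMn.
Qed.

Lemma shift_sum2_consr H b u v m :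
  shift_sum2 H u (b :: v) m =
  bconv b (fun i => shift_sum2 (fun x y => H x ((b + i)%N :: y)) u v) m.
Proof.
rewrite /shift_sum2 (eq_cauchy (g := fun j k => bconv b (fun i r =>
  shift_sum (fun x => shift_sum (fun y => H x ((b + i)%N :: y)) v r) u j) k)).
  by rewrite /bconv cauchyAC; apply: eq_cauchy => i l _; rewrite cauchyMn.
move=> j k _; rewrite -shift_sum_bconv.
by apply: eq_shift_sum => x; rewrite shift_sum_cons.
Qed.

End ShiftSum.

Lemma stuffle_nilr x : stuffle x [::] = [:: x].
Proof. by case: x. Qed.

Lemma stuffle_cons a x b y : stuffle (a :: x) (b :: y) =
  map (cons a) (stuffle x (b :: y)) ++ map (cons b) (stuffle (a :: x) y)
  ++ map (cons (a + b)%N) (stuffle x y).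
Proof. by []. Qed.

Section StuffleSum.
Variable A : zmodType.
Implicit Types (Y : seq nat -> A) (x y : seq nat).

Definition stuffle_sum Y x y := \sum_(w <- stuffle x y) Y w.

Lemma stuffle_sum_nill Y y : stuffle_sum Y [::] y = Y y.
Proof. exact: big_seq1. Qed.

Lemma stuffle_sum_nilr Y x : stuffle_sum Y x [::] = Y x.
Proof. by rewrite /stuffle_sum stuffle_nilr big_seq1. Qed.

Lemma stuffle_sum_cons Y a x b y :
  stuffle_sum Y (a :: x) (b :: y) =
  stuffle_sum (fun w => Y (a :: w)) x (b :: y) +
  stuffle_sum (fun w => Y (b :: w)) (a :: x) y +
  stuffle_sum (fun w => Y ((a + b)%N :: w)) x y.
Proof. by rewrite /stuffle_sum stuffle_cons !big_cat /= !big_map addrA. Qed.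

Theorem shift_sum2_stuffle Y u v m :
  shift_sum2 (stuffle_sum Y) u v m = \sum_(w <- stuffle u v) shift_sum Y w m.
Proof.
elim: u v Y m => [|a u IHu] v Y m.
  rewrite shift_sum2_nill big_seq1.
  by apply: eq_shift_sum => y; rewrite stuffle_sum_nill.
elim: v Y m => [|b v IHv] Y m.
  rewrite shift_sum2_nilr stuffle_nilr big_seq1.
  by apply: eq_shift_sum => x; rewrite stuffle_sum_nilr.
pose Ya i w := Y ((a + i)%N :: w).
pose Yb j w := Y ((b + j)%N :: w).
pose Yab q w := Y ((a + b + q)%N :: w).
have -> : shift_sum2 (stuffle_sum Y) (a :: u) (b :: v) m =
    bconv a (fun i => bconv b (fun j =>
      shift_sum2 (fun x y => stuffle_sum (Ya i) x ((b + j)%N :: y)) u v)) m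
  + bconv a (fun i => bconv b (fun j =>
      shift_sum2 (fun x y => stuffle_sum (Yb j) ((a + i)%N :: x) y) u v)) m
  + bconv a (fun i => bconv b (fun j =>
      shift_sum2 (stuffle_sum (Yab (i + j)%N)) u v)) m.
  rewrite shift_sum2_consl -!bconvD; apply: eq_bconv => i r.
  rewrite shift_sum2_consr -!bconvD; apply: eq_bconv => j s.
  rewrite -!shift_sum2D; apply: eq_shift_sum2 => x y.
  by rewrite stuffle_sum_cons /Yab addnACA.
rewrite stuffle_cons !big_cat /= !big_map addrA; congr (_ + _ + _);
  under [RHS]eq_bigr do rewrite shift_sum_cons; rewrite -bconv_sum.
- rewrite (@eq_bconv _ _ _ (fun i => shift_sum2 (stuffle_sum (Ya i)) u (b :: v))).
    by apply: eq_bconv => i r; apply: IHu.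
  by move=> i r; rewrite shift_sum2_consr.
- rewrite (bconvAC _ _ (fun i j =>
    shift_sum2 (fun x y => stuffle_sum (Yb j) ((a + i)%N :: x) y) u v)).
  rewrite (@eq_bconv _ _ _ (fun j => shift_sum2 (stuffle_sum (Yb j)) (a :: u) v)).
    by apply: eq_bconv => j r; apply: IHv.
  by move=> j r; rewrite shift_sum2_consl.
- rewrite -(bconv_nest _ _ (fun q r => \sum_(w <- stuffle u v) shift_sum (Yab q) w r)).
  by apply: eq_bconv => i r; apply: eq_bconv => j s; apply: IHu.
Qed.

End StuffleSum.

Lemma shift_sumM (A : pzRingType) (F G : seq nat -> A) u v j k :
  shift_sum F u j * shift_sum G v k =
  shift_sum (fun x => shift_sum (fun y => F x * G y) v k) u j.
Proof.
rewrite /shift_sum mulr_suml; apply: eq_bigr => n _; rewrite mulrnAl mulr_sumr.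
by congr (_ *+ _); apply: eq_bigr => p _; rewrite mulrnAr.
Qed.

Section ZetaShift.
Variables (R : realType) (Z : seq nat -> {poly R}).

Lemma zeta_shiftE w m : zeta_shift Z w m = (-1) ^+ m * shift_sum Z w m.
Proof. by congr (_ * _); apply: eq_bigr => n _; rewrite scaler_nat. Qed.

Lemma zeta_shift_mul u v m :
  (forall k l, is_index k -> is_index l -> Z k * Z l = stuffle_sum Z k l) ->
  is_index u -> is_index v ->
  pmul (zeta_shift Z u) (zeta_shift Z v) m = \sum_(w <- stuffle u v) zeta_shift Z w m.
Proof.
move=> Zmul u_idx v_idx.
under [RHS]eq_bigr do rewrite zeta_shiftE; rewrite -mulr_sumr -shift_sum2_stuffle.
rewrite /shift_sum2 /cauchy mulr_sumr; apply: eq_bigr => j _.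
have le_jm : (j <= m)%N by rewrite -ltnS.
rewrite !zeta_shiftE mulrACA -exprD subnKC // shift_sumM; congr (_ * _).
apply: eq_shift_sum_index => // x x_idx.
by apply: eq_shift_sum_index => // y y_idx; apply: Zmul.
Qed.

End ZetaShift.

Lemma coarsenings_cons a y : y != [::] ->
  coarsenings (a :: y) =
  flatten [seq [:: a :: l; (a + head 0 l)%N :: behead l] | l <- coarsenings y].
Proof. by case: y. Qed.

Lemma coarsenings_neq_nil y l : y != [::] -> l \in coarsenings y -> l != [::].
Proof.
case: y => [|a y] // _; case: (eqVneq y [::]) => [->|y_neq0].
  by rewrite inE => /eqP ->.
by rewrite coarsenings_cons // => /flatten_mapP[l' _]; rewrite !inE => /orP[]/eqP->.
Qed.

Lemma coarsenings_index y l : is_index y -> l \in coarsenings y -> is_index l.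
Proof.
elim: y l => [|a y IH] l; first by rewrite inE => _ /eqP ->.
move=> /andP[a_gt0 y_idx]; case: (eqVneq y [::]) => [->|y_neq0].
  by rewrite inE => /eqP ->; rewrite /is_index /= a_gt0.
rewrite coarsenings_cons // => /flatten_mapP[l' /(IH _ y_idx) l'_idx].
rewrite !inE => /orP[]/eqP->; first by rewrite /is_index /= a_gt0.
by case: l' l'_idx => [|c l'] /=; rewrite /is_index /= ?addn0 ?a_gt0 // => /andP[_ ->];
  rewrite ltn_addr.
Qed.

Section StuffleSumStar.
Variable A : zmodType.
Implicit Types (Y : seq nat -> A) (x y : seq nat).

Definition stuffle_sum_star Y x y :=
  \sum_(l <- coarsenings y) stuffle_sum Y x l.

(* The words of [stuffle_sum_star Y x y] whose first letter is that of the
   coarsening of [y]. *)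
Definition stuffle_sum_head Y x y :=
  \sum_(l <- coarsenings y)
    if l is c :: l' then stuffle_sum (fun w => Y (c :: w)) x l' else 0.

Lemma stuffle_sum_star_nil Y y : y != [::] ->
  stuffle_sum_star Y [::] y = stuffle_sum_head Y [::] y.
Proof.
move=> y_neq0; apply: eq_big_seq => l /(coarsenings_neq_nil y_neq0).
by case: l => [|c l] // _; rewrite !stuffle_sum_nill.
Qed.

Lemma stuffle_sum_star_cons Y a x y :
  stuffle_sum_star Y (a :: x) y =
  stuffle_sum_head Y x (a :: y) + stuffle_sum_head Y (a :: x) y.
Proof.
case: (eqVneq y [::]) => [->|y_neq0].
  by rewrite /stuffle_sum_star /stuffle_sum_head /= !big_seq1 !stuffle_sum_nilr addr0.
rewrite /stuffle_sum_head coarsenings_cons // big_flatten big_map -big_split.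
apply: eq_big_seq => l /(coarsenings_neq_nil y_neq0).
by case: l => [|c l] // _; rewrite big_cons big_seq1 /= stuffle_sum_cons addrAC.
Qed.

End StuffleSumStar.

Lemma alternating_telescope (A : pzRingType) (f h : nat -> A) r :
  f 0%N = h 0%N -> (forall i, (i < r)%N -> f i.+1 = h i + h i.+1) ->
  \sum_(i < r.+1) (-1) ^+ i * f i = (-1) ^+ r * h r.
Proof.
elim: r => [|r IH] f0 fS; first by rewrite big_ord1 f0.
rewrite big_ord_recr /= IH => [|//|i lt_ir]; last by apply: fS; rewrite ltnW.
by rewrite fS // exprS mulN1r !mulNr mulrDr opprD addrA subrr add0r.
Qed.

Lemma alternating_stuffle_sum_star (A : pzRingType) (Y : seq nat -> A) k :
  \sum_(i < (size k).+1) (-1) ^+ i * stuffle_sum_star Y (rev (take i k)) (drop i k)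
  = Y [::] *+ (size k == 0%N).
Proof.
case: (eqVneq k [::]) => [->|k_neq0].
  by rewrite big_ord1 /stuffle_sum_star /= big_seq1 stuffle_sum_nill mul1r.
have -> : (size k == 0%N) = false by rewrite size_eq0 (negPf k_neq0).
rewrite (@alternating_telescope _
  (fun i => stuffle_sum_star Y (rev (take i k)) (drop i k))
  (fun i => stuffle_sum_head Y (rev (take i k)) (drop i k))).
- by rewrite drop_size /stuffle_sum_head big_seq1 mulr0.
- by rewrite take0 drop0 stuffle_sum_star_nil.
move=> i lt_ik; rewrite (take_nth 0%N lt_ik) rev_rcons (drop_nth 0%N lt_ik).
exact: stuffle_sum_star_cons.
Qed.

Lemma pmul_zeta_shift_star (R : realType) (Z : seq nat -> {poly R}) x y m :
  (forall k l, is_index k -> is_index l -> Z k * Z l = stuffle_sum Z k l) ->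
  is_index x -> is_index y ->
  pmul (zeta_shift Z x) (zeta_shift_star Z y) m =
  stuffle_sum_star (fun w => zeta_shift Z w m) x y.
Proof.
move=> Zmul x_idx y_idx; rewrite /pmul /zeta_shift_star.
under eq_bigr do rewrite mulr_sumr; rewrite exchange_big.
apply: eq_big_seq => l /(coarsenings_index y_idx) l_idx.
exact: zeta_shift_mul.
Qed.

Lemma mzv_nil (R : realType) : mzv R [::] = 1.
Proof. by rewrite /mzv /zeta_trunc /=; apply: lim_cst. Qed.

Theorem corollary2p6 (R : realType) (Z : seq nat -> {poly R})
  (HZ : harmonic_regularization Z) (k : seq nat) (hk : is_index k) (m : nat) :
  \sum_(i < (size k).+1)
     (-1) ^+ i * pmul (zeta_shift Z (rev (take i k)))
                      (zeta_shift_star Z (drop i k)) m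
  = ((size k == 0%N) && (m == 0%N))%:R.
Proof.
case: HZ => Zadm _ Zmul.
have Z_nil : Z [::] = 1 by rewrite Zadm // mzv_nil.
have pmul_star i : pmul (zeta_shift Z (rev (take i k))) (zeta_shift_star Z (drop i k)) m
    = stuffle_sum_star (fun w => zeta_shift Z w m) (rev (take i k)) (drop i k).
  have : is_index (take i k ++ drop i k) by rewrite cat_take_drop.
  rewrite /is_index all_cat -(all_rev _ (take i k)) => /andP[take_idx drop_idx].
  exact: pmul_zeta_shift_star.
under eq_bigr do rewrite pmul_star.
rewrite alternating_stuffle_sum_star zeta_shiftE shift_sum_nil Z_nil.
by case: (size k == 0%N); case: eqP => [->|_]; rewrite ?expr0 ?mul1r ?mulr0 ?mulr0n.
Qed.
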